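(* Let $N=2^n$ and $L=\{f:\{0,1\}^n\to\{0,1\}\ :\ \exists s\in\{0,1\}^n\setminus\{0^n\}\ \forall x\ f(x)=f(x\oplus s)\}$. Every classical probabilistic property tester for $L$ with distance parameter $1/8$ (even with two-sided error) makes $\Omega(\sqrt N)$ queries.
   Context: Functions $f:\{0,1\}^n\to\{0,1\}$ are identified with strings of length $N=2^n$. $f$ is $\epsilon$-far from $L$ if it differs from every $g\in L$ in more than $\epsilon N$ points. A classical property tester with distance parameter $\epsilon$ is a probabilistic (possibly adaptive) algorithm querying values $f(x)$ that accepts every $f\in L$ with probability $\ge2/3$ and every $\epsilon$-far $f$ with probability $\le1/3$; complexity is the number of queries. *)

From HB Require Import structures.
From mathcomp Require Import all_boot all_order all_algebra.
Set Implicit Arguments. Unset Strict Implicit. Unset Printing Implicit Defensive.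
Import Order.TTheory GRing.Theory Num.Theory.

Definition point (n : nat) : finType := {ffun 'I_n -> bool}.

Definition xorp n (x s : point n) : point n := [ffun i => x i (+) s i].

Definition zerop n : point n := [ffun _ => false].

Definition boolfun (n : nat) : finType := {ffun point n -> bool}.

Definition inL n (f : boolfun n) : bool :=
  [exists s : point n, (s != zerop n) && [forall x : point n, f x == f (xorp x s)]].

Definition fdist n (f g : boolfun n) : nat := #|[set x : point n | f x != g x]|.

(* Deterministic adaptive query algorithms = decision trees: a node queries f at
   a point and continues according to the answer; a leaf outputs accept/reject. *)
Inductive dtree (n : nat) : Type :=
| Leaf of bool
| Node of point n & dtree n & dtree n.

Fixpoint run n (t : dtree n) (f : boolfun n) : bool :=
  match t with
  | Leaf b => b
  | Node x t0 t1 => if f x then run t1 f else run t0 f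
  end.

Fixpoint depth n (t : dtree n) : nat :=
  match t with
  | Leaf _ => 0
  | Node _ t0 t1 => (maxn (depth t0) (depth t1)).+1
  end.

Local Open Scope ring_scope.

(* A probabilistic (possibly adaptive) query algorithm: a probability distribution
   over deterministic decision trees, given by a finite list of (weight, tree). *)
Definition rand_alg (R : realFieldType) n := seq (R * dtree n).

Definition is_distribution (R : realFieldType) n (A : rand_alg R n) : Prop :=
  all (fun p => 0 <= p.1) A /\ \sum_(p <- A) p.1 = 1.

Definition accept_prob (R : realFieldType) n (A : rand_alg R n) (f : boolfun n) : R :=
  \sum_(p <- A) p.1 * (run p.2 f)%:R.

Definition makes_at_most (R : realFieldType) n (A : rand_alg R n) (q : nat) : Prop :=
  all (fun p => depth p.2 <= q)%N A.

Definition eps_far (R : realFieldType) n (eps : R) (f : boolfun n) : Prop :=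
  forall g : boolfun n, inL g -> eps * (2 ^ n)%:R < (fdist f g)%:R.

Definition is_tester (R : realFieldType) n (eps : R) (A : rand_alg R n) : Prop :=
  is_distribution A /\
  (forall f : boolfun n, inL f -> 2 / 3 <= accept_prob A f) /\
  (forall f : boolfun n, eps_far eps f -> accept_prob A f <= 1 / 3).

(* Yao's principle with the uniform distribution on all functions.  Fix a
   nonzero period [s].  A decision tree cannot tell a uniform function from a
   uniform [s]-periodic one (which lies in [L]) unless its queries contain two
   points [x] and [x + s]; with [q] queries this happens for at most [q ^ 2] of
   the [N - 1] periods.  Averaging over [s], a tester accepts a uniform function
   with probability at least [2/3 - O(q ^ 2 / N)].  On the other hand, a function
   [1/8]-close to some [s]-periodic function has few mismatched pairs
   [{x, x + s}], so at most a sixth of all functions are close to [L] and a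
   uniform function is accepted with probability at most [1/2]. *)

From HB Require Import structures.
From mathcomp Require Import all_boot all_order all_algebra.
From mathcomp Require Import ring lra zify.
Import Order.TTheory GRing.Theory Num.Theory.
Set Implicit Arguments. Unset Strict Implicit. Unset Printing Implicit Defensive.

Section Points.
Variable n : nat.
Implicit Types x y s : point n.

Lemma xorpK x s : xorp (xorp x s) s = x.
Proof. by apply/ffunP=> i; rewrite !ffunE addbK. Qed.

Lemma xorpC x y : xorp x y = xorp y x.
Proof. by apply/ffunP=> i; rewrite !ffunE addbC. Qed.

Lemma xorpA x y s : xorp (xorp x y) s = xorp x (xorp y s).
Proof. by apply/ffunP=> i; rewrite !ffunE addbA. Qed.

Lemma xorpp x : xorp x x = zerop n.
Proof. by apply/ffunP=> i; rewrite !ffunE addbb. Qed.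

Lemma xorp0 x : xorp x (zerop n) = x.
Proof. by apply/ffunP=> i; rewrite !ffunE addbF. Qed.

Lemma xorp_inj s : injective (fun x => xorp x s).
Proof. exact: (can_inj (g := fun x => xorp x s) (fun x => xorpK x s)). Qed.

Lemma card_point : #|point n| = (2 ^ n)%N.
Proof. by rewrite card_ffun card_bool card_ord. Qed.

Lemma card_boolfun : #|boolfun n| = (2 ^ 2 ^ n)%N.
Proof. by rewrite card_ffun card_bool card_point. Qed.

Definition xor_collision s (L : seq (point n)) := has (fun u => xorp u s \in L) L.

Lemma eq_xor_collision s L1 L2 : L1 =i L2 -> xor_collision s L1 = xor_collision s L2.
Proof.
by move=> eqL; rewrite /xor_collision (eq_has_r eqL); apply: eq_has => u /=; rewrite eqL.
Qed.

Lemma sub_xor_collision s L1 L2 :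
  {subset L1 <= L2} -> xor_collision s L1 -> xor_collision s L2.
Proof. by move=> sL /hasP [u uL xL]; apply/hasP; exists u; apply: sL. Qed.

Lemma sum_xor_collision_le L :
  (\sum_(s : point n | s != zerop n) xor_collision s L <= size L ^ 2)%N.
Proof.
pose S := [seq xorp u v | u <- L, v <- L].
apply: (@leq_trans (\sum_(s in S) 1)); last first.
  by rewrite sum1_card (leq_trans (card_size _)) // size_allpairs.
rewrite [X in (_ <= X)%N]big_mkcond [X in (_ <= X)%N](bigID (fun s => s != zerop n)) /=.
apply: leq_trans (leq_addr _ _); apply: leq_sum => s _.
case: (boolP (xor_collision s L)) => // /hasP [u uL xL].
suff -> : s \in S by [].
apply/allpairsP; exists (u, xorp u s); split => //=.
by rewrite -xorpA xorpp xorpC xorp0.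
Qed.

Lemma card_nonzero_point : (#|[pred s : point n | s != zerop n]|.+1 = 2 ^ n)%N.
Proof. by rewrite (cardC1 (zerop n)) card_point prednK // expn_gt0. Qed.

Lemma nonzero_coord s : s != zerop n -> exists i, s i.
Proof.
move=> s0; case: (pickP (fun j => s j)) => [j sj|s_off]; first by exists j.
by case/eqP: s0; apply/ffunP => j; rewrite ffunE s_off.
Qed.

Fixpoint queries (t : dtree n) (f : boolfun n) : seq (point n) :=
  match t with
  | Leaf _ => [::]
  | Node x t0 t1 => x :: (if f x then queries t1 f else queries t0 f)
  end.

Lemma size_queries t f : (size (queries t f) <= depth t)%N.
Proof.
elim: t => [b|x t0 IH0 t1 IH1] //=; rewrite ltnS.
by case: (f x); [apply: leq_trans IH1 (leq_maxr _ _)|apply: leq_trans IH0 (leq_maxl _ _)].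
Qed.

End Points.

Section Periodic.
Variable n : nat.
Variable s : point n.
Variable i : 'I_n.
Hypothesis s_i : s i.

Definition periodic (h : boolfun n) := [forall x, h x == h (xorp x s)].

Lemma periodicP h : periodic h -> forall x, h (xorp x s) = h x.
Proof. by move/forallP=> ph x; rewrite (eqP (ph x)). Qed.

Lemma xorp_coord x : xorp x s i = ~~ x i.
Proof. by rewrite ffunE s_i addbT. Qed.

(* A function is determined by the two periodic functions reading it on the
   half-spaces [x i = false] and [x i = true]. *)
Lemma card_boolfun_le_periodic :
  (#|boolfun n| <= #|[pred h | periodic h]| * #|[pred h | periodic h]|)%N.
Proof.
pose lo (f : boolfun n) : boolfun n := [ffun x : point n => f (if x i then xorp x s else x)].
pose hi (f : boolfun n) : boolfun n := [ffun x : point n => f (if x i then x else xorp x s)].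
have lohi_inj : injective (fun f => (lo f, hi f)).
  move=> f g [/ffunP lofg /ffunP hifg]; apply/ffunP => x.
  by have := lofg x; have := hifg x; rewrite !ffunE; case: (x i).
rewrite -cardX -(card_codom lohi_inj); apply: subset_leq_card; apply/subsetP => p.
case/codomP => f {p}->; rewrite !inE /=; apply/andP; split; apply/forallP => x;
  by rewrite !ffunE s_i addbT xorpK; case: (x i).
Qed.

Definition agrees (C : seq (point n * bool)) (f : boolfun n) := all (fun p => f p.1 == p.2) C.

Section Glue.
Variable D : seq (point n).
Hypothesis D_free : ~~ xor_collision s D.

(* One point of each pair [{x, x + s}], chosen inside [D] whenever possible;
   this is a transversal because [D] contains no pair. *)
Definition chosen x := (x \in D) || ((xorp x s \notin D) && ~~ x i).

Lemma chosen_or x : chosen x || chosen (xorp x s).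
Proof.
rewrite /chosen xorpK xorp_coord negbK.
by case: (x \in D); case: (xorp x s \in D); case: (x i).
Qed.

Lemma chosen_nand x : ~~ (chosen x && chosen (xorp x s)).
Proof.
have xsD : x \in D -> xorp x s \notin D.
  by move=> xD; apply: contra D_free => xsD; apply/hasP; exists x.
rewrite /chosen xorpK xorp_coord negbK.
case xD: (x \in D); first by rewrite (negbTE (xsD xD)).
by case: (xorp x s \in D); case: (x i).
Qed.

Definition glue (hg : boolfun n * boolfun n) : boolfun n :=
  [ffun x => if chosen x then hg.1 x else hg.2 x].

Lemma glue_inj : {in [pred hg | periodic hg.1 & periodic hg.2] &, injective glue}.
Proof.
move=> [h g] [h' g'] /andP [/= ph pg] /andP [/= ph' pg'] /ffunP eq_glue.
have eq_at x : (if chosen x then h x else g x) = (if chosen x then h' x else g' x).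
  by have := eq_glue x; rewrite !ffunE.
congr pair; apply/ffunP => x.
  case cx: (chosen x); first by have := eq_at x; rewrite cx.
  move: (chosen_or x); rewrite cx /= => cxs.
  by have := eq_at (xorp x s); rewrite cxs !periodicP.
case cx: (chosen x); last by have := eq_at x; rewrite cx.
move: (chosen_nand x); rewrite cx /= => /negbTE cxs.
by have := eq_at (xorp x s); rewrite cxs !periodicP.
Qed.

End Glue.

Lemma card_periodic_agrees C : ~~ xor_collision s (unzip1 C) ->
  (#|[pred h | periodic h]| * #|[pred h | periodic h && agrees C h]|
     <= #|[pred f | agrees C f]|)%N.
Proof.
move=> C_free; rewrite mulnC -cardX.
rewrite -(@card_in_image _ _ (glue (unzip1 C))) => [|p1 p2]; last first.
  rewrite !inE => /andP [/andP [ph1 _] pg1] /andP [/andP [ph2 _] pg2].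
  by apply: (glue_inj C_free); apply/andP.
apply: subset_leq_card; apply/subsetP => f /mapP [[h g]].
rewrite mem_enum !inE /= => /andP [/andP [_ hC] _] ->.
apply/allP => p pC; rewrite ffunE.
have -> : chosen (unzip1 C) p.1 by rewrite /chosen map_f.
exact: (allP hC).
Qed.

Lemma sum_split_value (Q : pred (boolfun n)) x (F : boolfun n -> nat) :
  (\sum_(h | Q h) F h =
   \sum_(h | Q h && (h x == true)) F h + \sum_(h | Q h && (h x == false)) F h)%N.
Proof.
rewrite (bigID (fun h : boolfun n => h x)).
by congr (_ + _); apply: eq_bigl => h; case: (h x).
Qed.

Lemma agrees_cons C x b (f : boolfun n) :
  agrees ((x, b) :: C) f = agrees C f && (f x == b).
Proof. by rewrite /agrees /= andbC. Qed.

(* As long as the queries of [t], together with the points fixed by [C],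
   contain no pair [{x, x + s}], a uniform function and a uniform [s]-periodic
   function agreeing with [C] are answered alike. *)
Lemma periodic_run_le t C : ~~ xor_collision s (unzip1 C) ->
  (#|[pred h | periodic h]| * \sum_(h | periodic h && agrees C h) run t h
     <= \sum_(f | agrees C f) (run t f || xor_collision s (unzip1 C ++ queries t f)))%N.
Proof.
elim: t C => [b|x t0 IH0 t1 IH1] C C_free /=.
  case: b; last by rewrite big1 ?muln0.
  have := card_periodic_agrees C_free.
  rewrite -[#|[pred h | _ && _]|]sum1_card -[#|[pred f | agrees C f]|]sum1_card.
  by move/leq_trans; apply; apply: leq_sum => f _.
set P := #|[pred h | periodic h]|.
case: (boolP (xor_collision s (x :: unzip1 C))) => [coll_x | free_x].
  apply: leq_trans (leq_trans (leq_mul (leqnn P) _) (card_periodic_agrees C_free)) _.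
    by rewrite -sum1_card; apply: leq_sum => h _; apply: leq_b1.
  rewrite -sum1_card; apply: leq_sum => f _.
  suff -> : xor_collision s (unzip1 C ++ x :: (if f x then queries t1 f else queries t0 f)).
    by rewrite orbT.
  by apply: sub_xor_collision coll_x => y; rewrite inE mem_cat inE => /orP [->|->]; rewrite ?orbT.
have branch b :
  (P * \sum_(h | periodic h && agrees C h && (h x == b)) (if h x then run t1 h else run t0 h)
   <= \sum_(f | agrees C f && (f x == b)) ((if f x then run t1 f else run t0 f) ||
        xor_collision s (unzip1 C ++ x :: (if f x then queries t1 f else queries t0 f))))%N.
  have IHb : (P * \sum_(h | periodic h && agrees ((x, b) :: C) h) run (if b then t1 else t0) h
     <= \sum_(f | agrees ((x, b) :: C) f) (run (if b then t1 else t0) f ||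
          xor_collision s (unzip1 ((x, b) :: C) ++ queries (if b then t1 else t0) f)))%N.
    by case: b; [apply: IH1|apply: IH0].
  apply: leq_trans (leq_trans IHb _); rewrite leq_eqVlt; apply/orP; left; apply/eqP.
    congr (_ * _); apply: eq_big => [h|h]; first by rewrite agrees_cons andbA.
    by move=> /andP [_ /eqP ->]; case: b in IHb *.
  apply: eq_big => [f|f]; first by rewrite agrees_cons.
  rewrite agrees_cons => /andP [_ /eqP ->]; case: b in IHb *; congr (_ || _);
    by apply: eq_xor_collision => y; rewrite /= !inE !mem_cat !inE orbCA.
rewrite (sum_split_value _ x) [X in (_ <= X)%N](sum_split_value _ x) mulnDr.
exact: leq_add (branch true) (branch false).
Qed.

End Periodic.

Lemma periodic_run_le_card n (s : point n) i (s_i : s i) (t : dtree n) :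
  (#|[pred h | periodic s h]| * \sum_(h | periodic s h) run t h <=
     \sum_(f : boolfun n) run t f + \sum_(f : boolfun n) xor_collision s (queries t f))%N.
Proof.
rewrite -big_split /=; apply: leq_trans (leq_trans (periodic_run_le s_i t (C := [::]) isT) _).
  by rewrite (eq_bigl (fun h => periodic s h)) // => h; rewrite andbT.
by apply: leq_sum => f _; case: (run _ _); case: (xor_collision _ _).
Qed.

(* Keep only the terms [j <= k] of
   [4 ^ #|H| = \sum_j 'C(#|H|, j) * 3 ^ (#|H| - j)]. *)
Lemma card_small_subsets (T : finType) (H : {set T}) k : (k <= #|H|)%N ->
  (3 ^ (#|H| - k) * #|[set A : {set T} | A \subset H & #|A| <= k]| <= 4 ^ #|H|)%N.
Proof.
move=> kH.
have card_le_binom : (#|[set A : {set T} | A \subset H & #|A| <= k]| <=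
          \sum_(j < k.+1) 'C(#|H|, j))%N.
  rewrite -sum1_card big_mkcond /=.
  apply: (@leq_trans (\sum_(A : {set T}) \sum_(j < k.+1) (A \subset H) && (#|A| == j))).
    apply: leq_sum => A _; rewrite inE.
    case/boolP: ((A \subset H) && (#|A| <= k)) => // /andP [AH Ak].
    by rewrite (bigD1 (Ordinal (Ak : #|A| < k.+1)%N)) //= AH eqxx.
  rewrite exchange_big /=; apply: leq_sum => j _.
  rewrite -cards_draws -sum1_card [X in (_ <= X)%N]big_mkcond /=.
  by apply: leq_sum => A _; rewrite inE.
apply: (@leq_trans (\sum_(j < k.+1) 'C(#|H|, j) * 3 ^ (#|H| - j))).
  rewrite mulnC (leq_trans (leq_mul card_le_binom (leqnn _))) // big_distrl /=.
  apply: leq_sum => j _; rewrite leq_mul2l leq_pexp2l ?orbT // leq_sub2l //.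
  by rewrite -ltnS.
rewrite (_ : 4 = 3 + 1)%N // expnDn.
rewrite (big_ord_widen _ (fun j => 'C(#|H|, j) * 3 ^ (#|H| - j)) (_ : k.+1 <= #|H|.+1)%N) //.
by rewrite big_mkcond /=; apply: leq_sum => j _; case: (j < k.+1)%N; rewrite // exp1n muln1.
Qed.

Section Mismatches.
Variable n : nat.
Variable s : point n.
Variable i : 'I_n.
Hypothesis s_i : s i.

Definition lower_half := [set x : point n | ~~ x i].

Lemma card_lower_half : (#|lower_half| + #|lower_half| = 2 ^ n)%N.
Proof.
have upper : ~: lower_half = (fun x => xorp x s) @: lower_half.
  apply/setP => y; rewrite !inE negbK; apply/idP/imsetP.
    by move=> yi; exists (xorp y s); rewrite ?xorpK // inE xorp_coord // yi.
  by case=> x; rewrite inE => xi ->; rewrite xorp_coord.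
by rewrite -{2}(card_imset _ (@xorp_inj _ s)) -upper cardsC card_point.
Qed.

(* Points of the lower half where [f] is not [s]-periodic: each one forces a
   disagreement with any [s]-periodic function. *)
Definition mismatches (f : boolfun n) := [set x in lower_half | f x != f (xorp x s)].

Lemma card_mismatches_le_fdist f g : periodic s g -> (#|mismatches f| <= fdist f g)%N.
Proof.
move=> pg; pose m x := if f x != g x then x else xorp x s.
have m_inj : {in mismatches f &, injective m}.
  move=> x y; rewrite !inE => /andP [xi _] /andP [yi _]; rewrite /m.
  case: (f x != g x); case: (f y != g y) => // eq_m; last exact: xorp_inj eq_m.
  - by move: (congr1 (fun z : point n => z i) eq_m); rewrite xorp_coord // (negbTE xi) (negbTE yi).
  - by move: (congr1 (fun z : point n => z i) eq_m); rewrite xorp_coord // (negbTE xi) (negbTE yi).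
rewrite /fdist -(card_in_imset m_inj); apply: subset_leq_card; apply/subsetP => y.
case/imsetP => x; rewrite !inE => /andP [_ fx] ->; rewrite /m.
case: ifP => // /negbFE /eqP fg.
by rewrite (periodicP pg) -fg eq_sym.
Qed.

(* [f] is determined by its mismatch set and its restriction to the upper half. *)
Lemma card_few_mismatches k :
  (#|[pred f : boolfun n | #|mismatches f| <= k]| <=
    #|[set A : {set point n} | A \subset lower_half & #|A| <= k]| * 2 ^ #|~: lower_half|)%N.
Proof.
rewrite -card_powerset -cardsX.
pose g (f : boolfun n) := (mismatches f, [set x : point n | x i & f x]).
have g_inj : injective g.
  move=> f1 f2 [/setP eq_mis /setP eq_up]; apply/ffunP => x.
  have upper (x' : point n) : x' i -> f1 x' = f2 x'.
    by move=> xi; have := eq_up x'; rewrite !inE xi /=; case: (f1 x'); case: (f2 x').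
  case xi: (x i); first exact: upper.
  have := eq_mis x; rewrite !inE xi /= (upper _ (_ : xorp x s i)); last by rewrite xorp_coord // xi.
  by case: (f1 x); case: (f2 x); case: (f2 (xorp x s)).
have -> : #|[pred f : boolfun n | #|mismatches f| <= k]| =
          #|g @: [set f | #|mismatches f| <= k]|.
  by rewrite card_imset //; apply: eq_card => f; rewrite !inE.
apply: subset_leq_card; apply/subsetP => p; case/imsetP => f; rewrite !inE => fk ->.
rewrite /g /= fk andbT; apply/andP; split; apply/subsetP => x; rewrite !inE.
  by case/andP.
by case/andP => ->.
Qed.

End Mismatches.

Definition near_periodic n (s : point n) k (f : boolfun n) :=
  [exists g, periodic s g && (fdist f g <= k)%N].

(* With [N = 16 j]: half-spaces have [8 j] points, and being [1/8]-close to
   [L] means being within distance [2 j]. *)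
Lemma card_near_periodic n (s : point n) j : s != zerop n -> (2 ^ n = 16 * j)%N ->
  (3 ^ (6 * j) * #|[pred f | near_periodic s (2 * j) f]| <= 4 ^ (8 * j) * 2 ^ (8 * j))%N.
Proof.
move=> /nonzero_coord [i s_i] Nj.
have card_lower : #|lower_half i| = (8 * j)%N.
  by apply/eqP; rewrite -(eqn_pmul2l (_ : 0 < 2)%N) // mul2n -addnn (card_lower_half s_i) Nj mulnA.
have card_upper : #|~: lower_half i| = (8 * j)%N.
  by apply/eqP; rewrite -(eqn_add2l #|lower_half i|) cardsC card_point Nj card_lower -mulnDl.
have near_few : (#|[pred f | near_periodic s (2 * j) f]| <=
                 #|[pred f : boolfun n | #|mismatches s i f| <= 2 * j]|)%N.
  apply: subset_leq_card; apply/subsetP => f; rewrite !inE => /existsP [g /andP [pg dg]].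
  exact: leq_trans (card_mismatches_le_fdist s_i f pg) dg.
apply: leq_trans (leq_mul (leqnn _) (leq_trans near_few (card_few_mismatches s_i _))) _.
rewrite card_upper mulnA leq_mul2r; apply/orP; right.
have := @card_small_subsets _ (lower_half i) (2 * j); rewrite card_lower -mulnBl.
by apply; rewrite leq_mul2r orbC.
Qed.

Lemma mul96_le_exp2 j : (10 <= j)%N -> (96 * j <= 2 ^ j)%N.
Proof.
elim: j => // j IH; rewrite leq_eqVlt => /orP [/eqP <-|] //.
rewrite ltnS => j_ge; rewrite expnS mulnSr mul2n -addnn leq_add ?IH //.
by apply: leq_trans (_ : 2 ^ 7 <= 2 ^ j)%N; rewrite // leq_pexp2l // (leq_trans _ j_ge).
Qed.

Lemma mul96_exp2_le_exp3 j : (10 <= j)%N -> (96 * j * 2 ^ (8 * j) <= 3 ^ (6 * j))%N.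
Proof.
move=> j_ge; rewrite !expnM (_ : 2 ^ 8 = 256)%N // (_ : 3 ^ 6 = 729)%N //.
apply: (@leq_trans (512 ^ j)).
  by rewrite (_ : 512 = 2 * 256)%N // expnMn leq_mul2r mul96_le_exp2 ?orbT.
by rewrite leq_exp2r // (leq_trans _ j_ge).
Qed.

Definition close_to_L n (f : boolfun n) := [exists g, inL g && (8 * fdist f g <= 2 ^ n)%N].

Lemma card_close_le_sum_near n j : (2 ^ n = 16 * j)%N ->
  (#|[pred f : boolfun n | close_to_L f]| <=
    \sum_(s : point n | s != zerop n) #|[pred f | near_periodic s (2 * j) f]|)%N.
Proof.
move=> Nj; rewrite -sum1_card big_mkcond /=.
apply: (@leq_trans (\sum_(f : boolfun n) \sum_(s : point n | s != zerop n)
                      near_periodic s (2 * j) f)); last first.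
  rewrite exchange_big /=; apply: leq_sum => s _.
  by rewrite -sum1_card [X in (_ <= X)%N]big_mkcond /=; apply: leq_sum => f _; rewrite !inE.
apply: leq_sum => f _; rewrite inE.
case: (boolP (close_to_L f)) => // /existsP [g /andP [/existsP [s /andP [s0 ps]] dg]].
rewrite (bigD1 s) //= (leq_trans _ (leq_addr _ _)) // lt0b.
apply/existsP; exists g; apply/andP; split; first exact: ps.
by move: dg; rewrite Nj (_ : 16 * j = 8 * (2 * j))%N ?leq_pmul2l // mulnA.
Qed.

Lemma card_close_to_L n j : (2 ^ n = 16 * j)%N -> (10 <= j)%N ->
  (6 * #|[pred f : boolfun n | close_to_L f]| <= #|boolfun n|)%N.
Proof.
move=> Nj j_ge.
have close_bound : (3 ^ (6 * j) * #|[pred f : boolfun n | close_to_L f]| <=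
                    2 ^ n * (4 ^ (8 * j) * 2 ^ (8 * j)))%N.
  apply: leq_trans (leq_mul (leqnn _) (card_close_le_sum_near Nj)) _.
  rewrite big_distrr /=.
  apply: (@leq_trans (\sum_(s : point n | s != zerop n) 4 ^ (8 * j) * 2 ^ (8 * j))%N).
    by apply: leq_sum => s s0; apply: card_near_periodic.
  by rewrite sum_nat_const leq_mul2r (leq_trans (max_card _)) ?card_point ?orbT.
rewrite -(@leq_pmul2l (3 ^ (6 * j))) ?expn_gt0 // mulnCA.
apply: leq_trans (leq_mul (leqnn _) close_bound) _.
have key := leq_mul (mul96_exp2_le_exp3 j_ge) (leqnn (2 ^ (16 * j))).
rewrite card_boolfun Nj (_ : 4 ^ (8 * j) = 2 ^ (16 * j))%N; last first.
  by rewrite -[4]/(2 ^ 2)%N -expnM mulnA.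
by apply: leq_trans key; apply: eq_leq; ring.
Qed.

Section Tester.
Local Open Scope ring_scope.
Variable R : realFieldType.
Variable n : nat.
Variable A : rand_alg R n.
Hypothesis A_ge0 : all (fun p => 0 <= p.1) A.
Hypothesis A_sum1 : \sum_(p <- A) p.1 = 1.
Variable q : nat.
Hypothesis A_depth : all (fun p => depth p.2 <= q)%N A.

Lemma ler_sum_alg (X Y : R * dtree n -> R) :
  (forall p, 0 <= p.1 -> (depth p.2 <= q)%N -> X p <= Y p) ->
  \sum_(p <- A) X p <= \sum_(p <- A) Y p.
Proof.
move=> XY; move: A_ge0 A_depth; elim: (A : seq _) => [|p B IH] /=; first by rewrite !big_nil.
by case/andP=> p0 B0 /andP [pq Bq]; rewrite !big_cons lerD ?XY ?IH.
Qed.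

Lemma sum_wconst (c : R) : \sum_(p <- A) p.1 * c = c.
Proof. by rewrite -mulr_suml A_sum1 mul1r. Qed.

Lemma accept_prob_le1 f : accept_prob A f <= 1.
Proof.
rewrite /accept_prob -[X in _ <= X]A_sum1 ler_sum_alg // => p p0 _.
by rewrite ler_piMr // lern1 leq_b1.
Qed.

Lemma sum_accept_prob (Q : pred (boolfun n)) :
  \sum_(f | Q f) accept_prob A f = \sum_(p <- A) p.1 * (\sum_(f | Q f) run p.2 f)%:R.
Proof.
rewrite /accept_prob exchange_big /=; apply: eq_bigr => p _.
by rewrite natr_sum mulr_sumr.
Qed.

Hypothesis accept_L : forall f, inL f -> 2 / 3 <= accept_prob A f.
Hypothesis reject_far : forall f, eps_far (1 / 8 : R) f -> accept_prob A f <= 1 / 3.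

Lemma sum_accept_ge s : s != zerop n ->
  (2 / 3) * #|boolfun n|%:R <= \sum_(f : boolfun n) accept_prob A f +
     \sum_(p <- A) p.1 * (\sum_(f : boolfun n) xor_collision s (queries p.2 f))%:R.
Proof.
move=> s0; have [i s_i] := nonzero_coord s0.
set P := #|[pred h | periodic s h]|.
have hybrid : P%:R * \sum_(h | periodic s h) accept_prob A h <=
    \sum_(f : boolfun n) accept_prob A f +
      \sum_(p <- A) p.1 * (\sum_(f : boolfun n) xor_collision s (queries p.2 f))%:R.
  rewrite sum_accept_prob (sum_accept_prob xpredT) mulr_sumr -big_split /=.
  apply: ler_sum_alg => p p0 _; rewrite mulrCA -mulrDr ler_wpM2l //.
  by rewrite -natrM -natrD ler_nat (periodic_run_le_card s_i).
have periodic_accepted : P%:R * (2 / 3) <= \sum_(h | periodic s h) accept_prob A h.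
  apply: (@le_trans _ _ (\sum_(h | periodic s h) (2 / 3 : R))).
    by rewrite sumr_const mulr_natl.
  by apply: ler_sum => h ph; apply: accept_L; apply/existsP; exists s; rewrite s0.
have F_le : #|boolfun n|%:R <= P%:R * P%:R :> R.
  by rewrite -natrM ler_nat (card_boolfun_le_periodic s_i).
apply: le_trans hybrid; apply: (@le_trans _ _ ((2 / 3) * (P%:R * P%:R))).
  by rewrite ler_wpM2l // divr_ge0.
by rewrite mulrCA ler_wpM2l // mulrC.
Qed.

Lemma far_of_not_close (f : boolfun n) : ~~ close_to_L f -> eps_far (1 / 8 : R) f.
Proof.
move=> not_close g Lg; have : ~~ (8 * fdist f g <= 2 ^ n)%N.
  by apply: contra not_close => close; apply/existsP; exists g; rewrite Lg.
by rewrite -ltnNge mul1r ltr_pdivrMl // -natrM ltr_nat.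
Qed.

Lemma collisions_bound :
  #|[pred s : point n | s != zerop n]|%:R * ((2 / 3) * #|boolfun n|%:R) <=
    #|[pred s : point n | s != zerop n]|%:R * \sum_(f : boolfun n) accept_prob A f
    + (#|boolfun n| * q ^ 2)%:R.
Proof.
have sum_nonzero c : #|[pred s : point n | s != zerop n]|%:R * c =
                     \sum_(s : point n | s != zerop n) c.
  by rewrite sumr_const mulr_natl.
rewrite !sum_nonzero; apply: le_trans (ler_sum _ (fun s s0 => sum_accept_ge s0)) _.
rewrite big_split /= lerD2l exchange_big /=.
rewrite -[X in _ <= X](sum_wconst (#|boolfun n| * q ^ 2)%:R); apply: ler_sum_alg => p p0 dp.
rewrite -mulr_sumr ler_wpM2l // -natr_sum ler_nat exchange_big /=.
rewrite -sum1_card big_distrl /=; apply: leq_sum => f _; rewrite mul1n.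
apply: leq_trans (sum_xor_collision_le _) _; rewrite leq_exp2r //.
exact: leq_trans (size_queries _ _) dp.
Qed.

Lemma sum_accept_le :
  \sum_(f : boolfun n) accept_prob A f <=
    #|boolfun n|%:R * (1 / 3) + #|[pred f : boolfun n | close_to_L f]|%:R.
Proof.
rewrite (bigID (@close_to_L n)) /= addrC lerD //.
  apply: (@le_trans _ _ (\sum_(f | ~~ close_to_L f) (1 / 3 : R))).
    by apply: ler_sum => f nf; apply/reject_far/far_of_not_close.
  rewrite (_ : #|boolfun n|%:R * (1 / 3) = \sum_(f : boolfun n) (1 / 3 : R)).
    by rewrite [X in _ <= X](bigID (@close_to_L n)) /= lerDr sumr_ge0 // => f _; rewrite divr_ge0.
  by rewrite sumr_const mulr_natl.
apply: (@le_trans _ _ (\sum_(f | close_to_L f) (1 : R))).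
  by apply: ler_sum => f _; apply: accept_prob_le1.
by rewrite sumr_const.
Qed.

Lemma card_nonzero_le j : (2 ^ n = 16 * j)%N -> (10 <= j)%N ->
  (#|[pred s : point n | s != zerop n]| <= 6 * q ^ 2)%N.
Proof.
move=> Nj j_ge.
have := collisions_bound; have := sum_accept_le.
have := card_close_to_L Nj j_ge; rewrite -(ler_nat R) natrM => close6.
have F0 : 0 < #|boolfun n|%:R :> R by rewrite ltr0n card_boolfun expn_gt0.
rewrite -(ler_nat R) !natrM /=; nra.
Qed.

End Tester.

Local Open Scope ring_scope.

Theorem theorem4p2 :
  exists K n0 : nat, (0 < K)%N /\
    forall n : nat, (n0 <= n)%N ->
    forall (R : realFieldType) (A : rand_alg R n) (q : nat),
      is_tester (1 / 8 : R) A -> makes_at_most A q ->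
      (2 ^ n <= K * q ^ 2)%N.
Proof.
exists 7%N, 8%N; split => // n n_ge R A q [[A_ge0 A_sum1] [accept_L reject_far]] A_depth.
have Nj : (2 ^ n = 16 * 2 ^ (n - 4))%N.
  by rewrite -[16%N]/(2 ^ 4)%N -expnD subnKC // (leq_trans _ n_ge).
have j_ge : (10 <= 2 ^ (n - 4))%N.
  by apply: (@leq_trans (2 ^ 4)); rewrite // leq_pexp2l // leq_subRL // (leq_trans _ n_ge).
have := card_nonzero_le A_ge0 A_sum1 A_depth accept_L reject_far Nj j_ge.
rewrite -ltnS card_nonzero_point Nj; nia.
Qed.
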